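(* Let $\mathbb{F}$ be a field, $n,d\ge 1$, $X^1,\dots,X^d$ pairwise disjoint sets of variables $X^i=\{x^i_{jk}:j,k\in[n]\}$, $X=\bigcup_i X^i$, $A^i$ the $n\times n$ matrix with $(j,k)$ entry $x^i_{jk}$, and $f$ the $(1,1)$ entry of $A^1A^2\cdots A^d$. Then there exists a bijective partition $B:X\to Y\cup Z$ such that $\mathrm{maxrank}(M_{f^B})=n^{d-1}$.
   Context: $Y$ and $Z$ are disjoint sets of variables, and a bijective partition $B:X\to Y\cup Z$ is a bijection onto $Y\cup Z$; $f^B$ is $f$ with each $x$ replaced by $B(x)$. For $g\in\mathbb{F}[Y,Z]$, the polynomial coefficient matrix $M_g$ has rows indexed by monic multilinear monomials $p$ in $Y$ and columns by monic multilinear monomials $q$ in $Z$, with $M_g(p,q)=G$ iff $g=pq\,G+Q$ uniquely with $G$ containing only variables present in $p,q$ and $Q$ having no monomial divisible by $pq$ that contains only variables present in $p,q$. $\mathrm{maxrank}(M_g)=\max_{S:Y\cup Z\to\mathbb{F}}\mathrm{rank}(M_g|_S)$, where $M_g|_S$ evaluates entries at $S$. *)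

From HB Require Import structures.
From mathcomp Require Import all_boot all_order all_algebra.
From mathcomp Require Import mpoly.

Set Implicit Arguments.
Unset Strict Implicit.
Unset Printing Implicit Defensive.

Import Order.TTheory GRing.Theory.
Local Open Scope ring_scope.

(* The variable set X = { x^i_{jk} : i in [d], j,k in [n] } as a finite type.
   (Indices are 0-based: i : 'I_d, j k : 'I_n.) *)
Definition Xvar (d n : nat) : finType := ('I_d * 'I_n * 'I_n)%type.

(* Polynomials in the variables X: variable number r stands for enum_val r. *)
Definition XPoly (F : fieldType) (d n : nat) := {mpoly F[#|Xvar d n|]}.

Definition xv (F : fieldType) (d n : nat) (i : 'I_d) (j k : 'I_n) : XPoly F d n :=
  'X_(enum_rank ((i, j, k) : Xvar d n)).

Definition Amat (F : fieldType) (d n : nat) (i : 'I_d) : 'M[XPoly F d n]_n :=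
  \matrix_(j, k) @xv F d n i j k.

(* f = the (1,1) entry (index 0 here) of A^1 A^2 ... A^d *)
Definition f_entry11 (F : fieldType) (d n : nat) (hn : (0 < n)%N) : XPoly F d n :=
  (\prod_(i < d) @Amat F d n i) (Ordinal hn) (Ordinal hn).

(* Variables Y ∪ Z: Y = {y_0,..,y_{p-1}} are the indices lshift q a (a : 'I_p),
   Z = {z_0,..,z_{q-1}} are the indices rshift p b (b : 'I_q) of 'I_(p+q). *)
Definition yvar (p q : nat) (a : 'I_p) : 'I_(p + q) := lshift q a.
Definition zvar (p q : nat) (b : 'I_q) : 'I_(p + q) := rshift p b.

Definition substB (F : fieldType) (d n p q : nat) (B : Xvar d n -> 'I_(p + q))
    (f : XPoly F d n) : {mpoly F[p + q]} :=
  mmap (@mpolyC _ F) (fun r => 'X_(B (enum_val r))) f.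

(* The set of variables of the monic multilinear monomial P(y) * Q(z),
   where P ⊆ Y and Q ⊆ Z. *)
Definition pqvars (p q : nat) (P : {set 'I_p}) (Q : {set 'I_q}) : {set 'I_(p + q)} :=
  (@yvar p q @: P) :|: (@zvar p q @: Q).

Definition mlin (N : nat) (U : {set 'I_N}) : 'X_{1..N} :=
  [multinom (i \in U : nat) | i < N].

(* The entry M_g(P,Q): the unique G with g = pq G + Q', G only in the variables
   of pq, and Q' without monomials divisible by pq using only variables of pq. *)
Definition pcm_entry (F : fieldType) (p q : nat) (g : {mpoly F[p + q]})
    (P : {set 'I_p}) (Q : {set 'I_q}) : {mpoly F[p + q]} :=
  let U := pqvars P Q in
  \sum_(m <- msupp g |
          ((mlin U <= m)%MM && [forall i, (i \notin U) ==> (m i == 0%N)]))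
     g@_m *: 'X_[(m - mlin U)%MM].

(* M_g |_S : the polynomial coefficient matrix evaluated at S : Y ∪ Z -> F.
   Rows are indexed by subsets of Y (monic multilinear monomials in Y),
   columns by subsets of Z, enumerated via enum_val. *)
Definition pcm_eval (F : fieldType) (p q : nat) (g : {mpoly F[p + q]})
    (S : 'I_(p + q) -> F) : 'M[F]_(#|{set 'I_p}|, #|{set 'I_q}|) :=
  \matrix_(a, b) (pcm_entry g (enum_val a) (enum_val b)).@[S].

Definition maxrank_is (F : fieldType) (p q : nat) (g : {mpoly F[p + q]}) (r : nat) :
    Prop :=
  (exists S : 'I_(p + q) -> F, \rank (pcm_eval g S) = r) /\
  (forall S : 'I_(p + q) -> F, (\rank (pcm_eval g S) <= r)%N).

(** The (1,1) entry of [A^1 ... A^d] is the sum, over the [n^(d-1)] paths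
    [0 = j_0, j_1, ..., j_(d-1), j_d = 0], of the multilinear monomials
    [x^1_(j_0 j_1) ... x^d_(j_(d-1) j_d)].  Send the variables of the
    odd-numbered matrices to [Y] and those of the even-numbered ones to [Z].
    Every inner vertex [j_k] lies on an edge of each parity, so both the
    [Y]-part and the [Z]-part of a monomial determine its path.  The
    coefficient matrix is therefore the constant matrix [R *m C^T], where
    [R] and [C] are the 0/1 incidence matrices of two injections of the set
    of paths, and its rank is the number of paths. *)

From HB Require Import structures.
From mathcomp Require Import all_boot all_order all_algebra.
From mathcomp Require Import mpoly.

Set Implicit Arguments.
Unset Strict Implicit.
Unset Printing Implicit Defensive.

Import Order.TTheory GRing.Theory.
Local Open Scope ring_scope.

(* Vertex [k] of the path [a, t 0, ..., t (m - 1), b]. *)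
Definition path_vertex (n m : nat) (a b : 'I_n) (t : {ffun 'I_m -> 'I_n})
    (k : nat) : 'I_n :=
  if k is k'.+1 then (if insub k' is Some o then t o else b) else a.

Arguments path_vertex : simpl never.

Lemma path_vertexS n m a b (t : {ffun 'I_m -> 'I_n}) (o : 'I_m) :
  path_vertex a b t o.+1 = t o.
Proof.
rewrite /path_vertex; case: insubP => [u _ Hu|]; last by rewrite ltn_ord.
by congr (t _); apply: val_inj.
Qed.

Lemma path_vertex_last n m a b (t : {ffun 'I_m -> 'I_n}) :
  path_vertex a b t m.+1 = b.
Proof. by rewrite /path_vertex insubF // ltnn. Qed.

Lemma sum_ffun_ordS (R : nmodType) (T : finType) m
    (G : {ffun 'I_m.+1 -> T} -> R) :
  \sum_(t : {ffun 'I_m.+1 -> T}) G t =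
  \sum_(c : T) \sum_(t : {ffun 'I_m -> T})
     G [ffun i => if unlift ord_max i is Some j then t j else c].
Proof.
rewrite pair_big /=.
pose glue (u : T * {ffun 'I_m -> T}) : {ffun 'I_m.+1 -> T} :=
  [ffun i => if unlift ord_max i is Some j then u.2 j else u.1].
pose cut (t : {ffun 'I_m.+1 -> T}) := (t ord_max, [ffun j => t (lift ord_max j)]).
rewrite (reindex glue) //; exists cut => [[c u] _|t _]; rewrite /glue /cut /=.
  by rewrite ffunE unlift_none; congr pair; apply/ffunP=> j; rewrite !ffunE liftK.
by apply/ffunP=> i; rewrite ffunE; case: unliftP => [j ->|->]; rewrite ?ffunE.
Qed.

Lemma prodmx_path (R : pzRingType) n (M : nat -> 'M[R]_n) m (a b : 'I_n) :
  (\prod_(i < m.+1) M i) a b =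
  \sum_(t : {ffun 'I_m -> 'I_n})
     \prod_(i < m.+1) M i (path_vertex a b t i) (path_vertex a b t i.+1).
Proof.
elim: m b => [|m IH] b.
  rewrite big_ord1 (big_pred1 [ffun=> b]) ?big_ord1 ?path_vertex_last // => t.
  by apply/esym/eqP/ffunP => -[].
rewrite (big_ord_recr m.+1) /= -mulmxE mxE sum_ffun_ordS; apply: eq_bigr => c _.
rewrite IH mulr_suml; apply: eq_bigr => t _.
set t' := [ffun i => _].
have t'E k : (k <= m.+1)%N -> path_vertex a b t' k = path_vertex a c t k.
  case: k => [//|k] lt_k_m; rewrite (path_vertexS _ _ _ (Ordinal lt_k_m)) ffunE.
  case: unliftP => [j /(congr1 val)|/(congr1 val) /= ->].
    by rewrite /= /bump leqNgt ltn_ord add0n => ->; rewrite path_vertexS.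
  by rewrite path_vertex_last.
rewrite (big_ord_recr m.+1); congr (_ * _).
  by apply: eq_bigr => i _; rewrite !t'E //= ltnW // ltnS.
by rewrite (path_vertexS _ _ _ ord_max) ffunE unlift_none path_vertex_last.
Qed.

Lemma mxrank_mul_isometries (F : fieldType) m1 m2 N
    (R : 'M[F]_(m1, N)) (C : 'M_(m2, N)) :
  R^T *m R = 1%:M -> C^T *m C = 1%:M -> \rank (R *m C^T) = N.
Proof.
move=> RtR CtC; apply/eqP; rewrite eqn_leq.
rewrite (leq_trans (mxrankM_maxl _ _) (rank_leq_col _)) /=.
have := leq_trans (mxrankM_maxl (R^T *m (R *m C^T)) C) (mxrankM_maxr R^T _).
by rewrite !mulmxA RtR mul1mx CtC mxrank1.
Qed.

Definition incidence_mx (F : fieldType) (T S : finType) (f : T -> S) :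
    'M[F]_(#|S|, #|T|) :=
  \matrix_(a, u) ((f (enum_val u) == enum_val a)%:R).

Lemma incidence_mx_isometry (F : fieldType) (T S : finType) (f : T -> S) :
  injective f -> (incidence_mx F f)^T *m incidence_mx F f = 1%:M.
Proof.
move=> f_inj; apply/matrixP => u v; rewrite !mxE.
rewrite (bigD1 (enum_rank (f (enum_val u)))) //= big1 ?addr0.
  by rewrite !mxE enum_rankK eqxx mul1r (inj_eq f_inj) (inj_eq enum_val_inj) eq_sym.
move=> a a_neq; rewrite !mxE; case: eqP => [fu|]; last by rewrite mul0r.
by rewrite fu enum_valK eqxx in a_neq.
Qed.

Lemma mlin_inj N : injective (@mlin N).
Proof.
move=> U V eqUV; apply/setP => i.
have := congr1 (fun m : 'X_{1..N} => m i) eqUV.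
by rewrite /= /mlin !mnmE; case: (i \in U); case: (i \in V).
Qed.

Lemma mlin_divides_with_support N (U V : {set 'I_N}) :
  ((mlin U <= mlin V)%MM && [forall i, (i \notin U) ==> (mlin V i == 0%N)])
  = (V == U).
Proof.
apply/idP/eqP => [/andP [/mnm_lepP UleV /forallP suppV]|->].
  apply/eqP; rewrite eqEsubset; apply/andP; split; apply/subsetP => i iV.
    apply/negPn/negP => iNU; have := suppV i.
    by rewrite iNU /mlin mnmE iV.
  by have := UleV i; rewrite /mlin !mnmE iV; case: (i \in V).
rewrite (_ : (mlin U <= mlin U)%MM) /=; last exact/mnm_lepP.
by apply/forallP => i; apply/implyP => iNU; rewrite /mlin mnmE (negbTE iNU).
Qed.

Section CoefficientMatrix.
Variables (F : fieldType) (p q : nat).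

Lemma pcm_entry_multilinear (g : {mpoly F[p + q]}) P Q :
  {in msupp g, forall m, exists V, m = mlin V} ->
  pcm_entry g P Q = (g@_(mlin (pqvars P Q)))%:MP.
Proof.
move=> g_ml; rewrite /pcm_entry; set U := pqvars P Q.
rewrite big_seq_cond (eq_bigl (fun m => (m \in msupp g) && (m == mlin U))); last first.
  move=> m /=; case: (boolP (m \in msupp g)) => //= m_g.
  by have [V ->] := g_ml m m_g; rewrite mlin_divides_with_support (inj_eq (@mlin_inj _)).
rewrite big_mkcond /=.
have subUU : (mlin U - mlin U)%MM = 0%MM by apply/mnmP=> i; rewrite !mnmE subnn.
case: (boolP (mlin U \in msupp g)) => U_g.
  rewrite (bigD1_seq (mlin U)) ?msupp_uniq //= U_g eqxx subUU mpolyX0 -alg_mpolyC.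
  by rewrite big1 ?addr0 // => m /negbTE ->; rewrite andbF.
rewrite big1 ?memN_msupp_eq0 ?mpolyC0 // => m _.
by case: (boolP (m \in msupp g)) => //= m_g; case: eqP => // mU; rewrite -mU m_g in U_g.
Qed.

Definition ypart (V : {set 'I_(p + q)}) : {set 'I_p} := [set a | yvar q a \in V].
Definition zpart (V : {set 'I_(p + q)}) : {set 'I_q} := [set b | zvar p b \in V].

Lemma ypart_pqvars P Q : ypart (pqvars P Q) = P.
Proof.
apply/setP => a; rewrite !inE mem_imset; last exact: lshift_inj.
case: (a \in P) => //=; apply/imsetP => -[b _ /eqP].
by rewrite /yvar /zvar eq_lrshift.
Qed.

Lemma zpart_pqvars P Q : zpart (pqvars P Q) = Q.
Proof.
apply/setP => b; rewrite !inE (mem_imset _ _ (@rshift_inj p q)) orbC.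
case: (b \in Q) => //=; apply/imsetP => -[a _ /eqP].
by rewrite /yvar /zvar eq_sym eq_lrshift.
Qed.

Lemma pqvars_parts V : pqvars (ypart V) (zpart V) = V.
Proof.
apply/setP => k; rewrite -(splitK k); case: (split k) => [a|b] /=.
  rewrite !inE (mem_imset _ _ (@lshift_inj p q)) inE.
  case: (lshift q a \in V) => //=; apply/negP => /imsetP [b _ /eqP].
  by rewrite /zvar eq_lrshift.
rewrite !inE (mem_imset _ _ (@rshift_inj p q)) inE orbC.
case: (rshift p b \in V) => //=; apply/negP => /imsetP [a _ /eqP].
by rewrite /yvar eq_sym eq_lrshift.
Qed.

Lemma eq_pqvars V P Q :
  (V == pqvars P Q) = (ypart V == P) && (zpart V == Q).
Proof.
apply/eqP/andP => [->|[/eqP <- /eqP <-]]; last by rewrite pqvars_parts.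
by rewrite ypart_pqvars zpart_pqvars.
Qed.

Variables (T : finType) (W : T -> {set 'I_(p + q)}).
Hypotheses (ypart_W_inj : injective (ypart \o W)) (zpart_W_inj : injective (zpart \o W)).

Let g : {mpoly F[p + q]} := \sum_(t : T) 'X_[mlin (W t)].

Lemma mcoeff_sum_mlin U : g@_(mlin U) = \sum_(t : T) ((W t == U)%:R : F).
Proof.
by rewrite raddf_sum; apply: eq_bigr => t _; rewrite /= mcoeffX (inj_eq (@mlin_inj _)).
Qed.

Lemma msupp_sum_mlin : {in msupp g, forall m, exists V, m = mlin V}.
Proof.
move=> m; case: (pickP (fun t => mlin (W t) == m)) => [t /eqP <-|no_t].
  by exists (W t).
by rewrite mcoeff_msupp raddf_sum big1 ?eqxx // => t _; rewrite /= mcoeffX no_t.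
Qed.

Lemma pcm_eval_sum_mlin S :
  pcm_eval g S = incidence_mx F (ypart \o W) *m (incidence_mx F (zpart \o W))^T.
Proof.
apply/matrixP => a b.
rewrite !mxE (pcm_entry_multilinear _ _ msupp_sum_mlin) mevalC mcoeff_sum_mlin.
rewrite (reindex (enum_val : 'I_#|T| -> T)); last exact: onW_bij (enum_val_bij _).
apply: eq_bigr => u _; rewrite !mxE eq_pqvars /=.
by case: (_ == _); case: (_ == _); rewrite ?mul1r ?mul0r.
Qed.

Lemma mxrank_pcm_eval_sum_mlin S : \rank (pcm_eval g S) = #|T|.
Proof.
by rewrite pcm_eval_sum_mlin mxrank_mul_isometries ?incidence_mx_isometry.
Qed.

End CoefficientMatrix.

Lemma exists_split_bij (T : finType) (A : pred T) :
  exists B : T -> 'I_(#|A| + #|[predC A]|), [/\ bijective B,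
    forall x, A x -> exists a, B x = yvar _ a &
    forall x, ~~ A x -> exists b, B x = zvar _ b].
Proof.
pose C (k : 'I_(#|A| + #|[predC A]|)) : T :=
  match split k with inl a => enum_val a | inr b => enum_val b end.
have C_inj : injective C.
  move=> k1 k2; rewrite /C -{2}(splitK k1) -{2}(splitK k2).
  case: (split k1) => [a1|b1]; case: (split k2) => [a2|b2] /=.
  - by move/enum_val_inj => ->.
  - by move=> E; have := enum_valP a1; have := enum_valP b2; rewrite E inE => /negbTE ->.
  - by move=> E; have := enum_valP a2; have := enum_valP b1; rewrite E inE => /negbTE ->.
  - by move/enum_val_inj => ->.
have [B BK CK] : bijective C by apply: inj_card_bij; rewrite // card_ord cardC.
exists B; split => [|x xA|x xNA]; first by exists C.
  exists (enum_rank_in xA x).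
  by rewrite -[RHS]BK /C /yvar (unsplitK (inl _ _)) enum_rankK_in.
have xNA' : x \in [predC A] by rewrite inE.
exists (enum_rank_in xNA' x).
by rewrite -[RHS]BK /C /zvar (unsplitK (inr _ _)) enum_rankK_in.
Qed.

Section GenericMatrixProduct.
Variables (F : fieldType) (n d p q : nat) (hn : (0 < n)%N).
Variables (B : Xvar d.+1 n -> 'I_(p + q)) (B_inj : injective B).

Let path := {ffun 'I_d -> 'I_n}.
Let vertex (t : path) := path_vertex (Ordinal hn) (Ordinal hn) t.

Definition path_edge (t : path) (i : 'I_d.+1) := B (i, vertex t i, vertex t i.+1).

Definition path_vars (t : path) := [set path_edge t i | i : 'I_d.+1].

Lemma path_edge_inj t : injective (path_edge t).
Proof. by move=> i j /B_inj []. Qed.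

Lemma path_monomial (t : path) :
  (\sum_(i < d.+1) U_(path_edge t i))%MM = mlin (path_vars t).
Proof.
apply/mnmP => k; rewrite mnm_sumE /mlin mnmE.
case: (boolP (k \in path_vars t)) => [/imsetP [i0 _ ->]|kNt].
  rewrite (bigD1 i0) //= mnm1E eqxx big1 // => i i_neq.
  by rewrite mnm1E (inj_eq (@path_edge_inj t)) (negbTE i_neq).
rewrite big1 // => i _; rewrite mnm1E; case: eqP => // ik.
by rewrite -ik imset_f in kNt.
Qed.

Lemma substB_f_entry11 :
  substB B (@f_entry11 F d.+1 n hn) = \sum_(t : path) 'X_[mlin (path_vars t)].
Proof.
rewrite /f_entry11 /substB.
under eq_bigr => i _ do rewrite -[i in Amat _ _ i]inord_val.
rewrite (prodmx_path (fun k => @Amat F d.+1 n (inord k))) rmorph_sum.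
apply: eq_bigr => t _; rewrite -path_monomial.
rewrite (big_morph _ (@mpolyXD _ F) (@mpolyX0 _ F)) rmorph_prod.
by apply: eq_bigr => i _; rewrite mxE inord_val /xv /= mmapX mmap1U enum_rankK.
Qed.

(* Each inner vertex [o.+1] is an endpoint of the edges [o] and [o.+1], one of
   which satisfies [par]. *)
Lemma path_eq_of_edges (par : pred nat) (s t : path) :
  (forall k, par k || par k.+1) ->
  (forall i : 'I_d.+1, par i -> path_edge s i \in path_vars t) -> s = t.
Proof.
move=> par_cover s_t; apply/ffunP => o.
have edge_eq (i : 'I_d.+1) :
    par i -> vertex s i = vertex t i /\ vertex s i.+1 = vertex t i.+1.
  by move=> /s_t /imsetP [i' _ /B_inj [-> -> ->]].
rewrite -(path_vertexS (Ordinal hn) (Ordinal hn) s).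
rewrite -(path_vertexS (Ordinal hn) (Ordinal hn) t).
have lt_o_d1 : (o < d.+1)%N by rewrite ltnW // ltnS.
have lt_o1_d1 : (o.+1 < d.+1)%N by rewrite ltnS.
case/orP: (par_cover o) => [par_o|par_o1].
  by case: (edge_eq (Ordinal lt_o_d1) par_o).
by case: (edge_eq (Ordinal lt_o1_d1) par_o1).
Qed.

Hypothesis B_even : forall x : Xvar d.+1 n, ~~ odd x.1.1 -> exists a, B x = yvar q a.
Hypothesis B_odd : forall x : Xvar d.+1 n, odd x.1.1 -> exists b, B x = zvar p b.

Lemma ypart_path_vars_inj : injective (@ypart p q \o path_vars).
Proof.
move=> s t /= st; apply: (@path_eq_of_edges (fun k => ~~ odd k)) => [k|i i_even].
  by rewrite /= negbK; case: odd.
have [a Ba] := @B_even (i, vertex s i, vertex s i.+1) i_even.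
have : a \in ypart (path_vars s) by rewrite inE -Ba imset_f.
by rewrite st inE /path_edge -Ba.
Qed.

Lemma zpart_path_vars_inj : injective (@zpart p q \o path_vars).
Proof.
move=> s t /= st; apply: (@path_eq_of_edges odd) => [k|i i_odd].
  by rewrite /=; case: odd.
have [b Bb] := @B_odd (i, vertex s i, vertex s i.+1) i_odd.
have : b \in zpart (path_vars s) by rewrite inE -Bb imset_f.
by rewrite st inE /path_edge -Bb.
Qed.

Lemma mxrank_pcm_eval_f_entry11 S :
  \rank (pcm_eval (substB B (@f_entry11 F d.+1 n hn)) S) = (n ^ d)%N.
Proof.
rewrite substB_f_entry11 mxrank_pcm_eval_sum_mlin.
- by rewrite card_ffun !card_ord.
- exact: ypart_path_vars_inj.
- exact: zpart_path_vars_inj.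
Qed.

End GenericMatrixProduct.

Theorem lemma2 (F : fieldType) (n d : nat) (hn : (0 < n)%N) (hd : (0 < d)%N) :
  exists (p q : nat) (B : Xvar d n -> 'I_(p + q)),
    bijective B /\ @maxrank_is F p q (@substB F d n p q B (@f_entry11 F d n hn)) (n ^ d.-1).
Proof.
case: d hd => // d _.
have [B [B_bij B_even B_odd]] :=
  exists_split_bij (fun x : Xvar d.+1 n => ~~ odd x.1.1).
exists _, _, B; split => //.
have rankE := mxrank_pcm_eval_f_entry11 (F := F) hn (bij_inj B_bij) B_even
  (fun x odd_x => B_odd x (introT negPn odd_x)).
by split; [exists (fun _ => 0); rewrite rankE | move=> S; rewrite rankE].
Qed.
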